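(* $\chi_{alg}(K_j)=j$ for $j=2,3,4$.
   Context: Graphs are finite, loopless, with symmetric edge sets; $K_c$ is the complete graph on $c$ vertices. For finite sets with $|I|=n$, $|O|=m$ ($O=\{0,\dots,m-1\}$), let $\mathbb F(n,m)$ be the free product of $n$ copies of the cyclic group of order $m$ with generators $u_v$, $\mathbb C[\mathbb F(n,m)]$ its group $*$-algebra, $\omega=e^{2\pi i/m}$ and $e_{v,a}=\frac1m\sum_{k=0}^{m-1}(\omega^{-a}u_v)^k$. For graphs $G,H$, the graph homomorphism game has $I=V(G)$, $O=V(H)$, $\lambda(v,w,a,b)=0$ iff ($v=w$ and $a\ne b$) or ($(v,w)\in E(G)$ and $(a,b)\notin E(H)$). $\mathcal I(G,H)$ is the two-sided $*$-ideal generated by $\{e_{v,a}e_{w,b}:\lambda(v,w,a,b)=0\}$, $\mathcal A(G,H)=\mathbb C[\mathbb F(n,m)]/\mathcal I(G,H)$, and $\chi_{alg}(G)=\min\{c:\mathcal A(G,K_c)\neq0\}$. *)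

From mathcomp Require Import all_boot all_algebra.
From mathcomp Require Import complex.
From mathcomp Require Import Rstruct.
From Stdlib Require Import Reals.
Import GRing.Theory Num.Theory.

Set Implicit Arguments.
Unset Strict Implicit.
Unset Printing Implicit Defensive.

Definition Cx : Type := (Rdefinitions.R)[i].

Definition omega (m : nat) : Cx :=
  @Complex Rdefinitions.R (Rtrigo_def.cos (2 * Rtrigo1.PI / INR m))%R
          (Rtrigo_def.sin (2 * Rtrigo1.PI / INR m))%R.

(* Words in the generators: a letter (v, k) stands for u_v ^ k.
   Group elements of F(n,m) are represented by reduced words
   (no letter with exponent = 0 mod m, exponents in 1..m-1,
   no two consecutive letters with the same generator). *)
Definition letter (n : nat) := ('I_n * nat)%type.

(* multiply the letter x onto the left of a reduced word s, and reduce *)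
Definition push (n m : nat) (x : letter n) (s : seq (letter n)) : seq (letter n) :=
  if (x.2 %% m == 0)%N then s else
  match s with
  | y :: s' =>
      if x.1 == y.1 then
        (let k := ((x.2 + y.2) %% m)%N in if k == 0%N then s' else (x.1, k) :: s')
      else (x.1, (x.2 %% m)%N) :: s
  | [::] => [:: (x.1, (x.2 %% m)%N)]
  end.

Definition reduce (n m : nat) (w : seq (letter n)) : seq (letter n) :=
  foldr (@push n m) [::] w.

(* inverse of a word: (u_{v1}^{k1} ... u_{vr}^{kr})^{-1} = u_{vr}^{m-kr} ... u_{v1}^{m-k1} *)
Definition winv (n m : nat) (w : seq (letter n)) : seq (letter n) :=
  rev [seq (x.1, (m - x.2 %% m)%N) | x <- w].

Local Open Scope ring_scope.

(* An element is a finite formal linear combination sum_t c_t g_t of words;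
   two combinations denote the same element of C[F(n,m)] iff all their
   coefficients (on reduced words = group elements) agree. *)
Definition gelt (n : nat) := seq (Cx * seq (letter n)).

Definition coef (n m : nat) (p : gelt n) (w : seq (letter n)) : Cx :=
  \sum_(t <- p | reduce m t.2 == w) t.1.

Definition gmul (n : nat) (p q : gelt n) : gelt n :=
  [seq (t.1 * s.1, t.2 ++ s.2) | t <- p, s <- q].

Definition gstar (n m : nat) (p : gelt n) : gelt n :=
  [seq ((t.1)^*, winv m t.2) | t <- p].

Definition gone (n : nat) : gelt n := [:: (1, [::])].

Definition proj_e (n m : nat) (v : 'I_n) (a : 'I_m) : gelt n :=
  [seq ((m%:R)^-1 * ((omega m)^-1 ^+ a) ^+ k, nseq k (v, 1%N)) | k <- iota 0 m].

Definition lambda_zero (n m : nat) (eG : rel 'I_n) (eH : rel 'I_m)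
    (v w : 'I_n) (a b : 'I_m) : bool :=
  ((v == w) && (a != b)) || (eG v w && ~~ eH a b).

(* generator of the *-ideal indexed by (v,w,a,b,star-flag):
   e_{v,a} e_{w,b} or its adjoint *)
Definition igen (n m : nat) (s : 'I_n * 'I_n * 'I_m * 'I_m * bool) : gelt n :=
  let: (v, w, a, b, st) := s in
  let p := gmul (proj_e v a) (proj_e w b) in
  if st then gstar m p else p.

(* p lies in the two-sided *-ideal I(G,H) generated by
   { e_{v,a} e_{w,b} : lambda(v,w,a,b) = 0 }, i.e. p is a finite sum of terms
   x * g * y with g a generator or the adjoint of a generator. *)
Definition in_ideal (n m : nat) (eG : rel 'I_n) (eH : rel 'I_m) (p : gelt n) : Prop :=
  exists l : seq (gelt n * ('I_n * 'I_n * 'I_m * 'I_m * bool) * gelt n),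
    all (fun t => let: (_, (v, w, a, b, _), _) := t in lambda_zero eG eH v w a b) l
    /\ forall u : seq (letter n),
         coef m p u =
         coef m (flatten [seq (let: (x, s, y) := t in gmul (gmul x (@igen n m s)) y) | t <- l]) u.

(* A(G,H) = C[F(n,m)] / I(G,H) is nonzero iff I(G,H) is not everything *)
Definition alg_nonzero (n m : nat) (eG : rel 'I_n) (eH : rel 'I_m) : Prop :=
  exists p : gelt n, ~ in_ideal eG eH p.

Local Close Scope ring_scope.

Definition Kgraph (c : nat) : rel 'I_c := fun x y => x != y.

Definition chi_alg_is (n : nat) (eG : rel 'I_n) (c : nat) : Prop :=
  0 < c /\ alg_nonzero eG (@Kgraph c) /\
  forall c', 0 < c' < c -> ~ alg_nonzero eG (@Kgraph c').

(* A graph homomorphism f : G -> H yields the one-dimensional representation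
   u_v |-> omega^(f v) of C[F(n,m)], in which e_{v,a} |-> [f v = a]; it kills every
   generator of I(G,H), so A(G,H) <> 0, and the identity of K_j gives A(K_j,K_j) <> 0.
   Conversely, modulo I(K_n,K_c) the colour classes E_a = sum_v e_{v,a} are
   idempotents (e_{v,a} e_{w,a} for v <> w and e_{v,a} e_{v,b} for a <> b vanish, and
   sum_b e_{v,b} = 1) and sum_a E_a = n.  For c < n <= 4, adding 4 - n copies of 1
   writes 4 as a sum of at most three idempotents, and in any ring this forces
   120 = 0; as 120 is invertible in C, the ideal is everything. *)

From mathcomp Require Import all_boot all_algebra complex Rstruct.
From mathcomp Require Import ring.
From Stdlib Require Reals Lra ZArith Ncring Ncring_tac Ncring_initial.
Import GRing.Theory Num.Theory.
Set Implicit Arguments.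
Unset Strict Implicit.

Module IdempotentSums.
Import Ncring Ncring_tac Ncring_initial ZArith.

Section SetoidRing.
Context {R : Type} `{Rr : Ring R}.

(* Ncring provides no morphism instance for the action of Z, which [setoid_rewrite] needs. *)
#[local] Instance zmul_proper : Proper (eq ==> ring_eq ==> ring_eq) (@multiplication Z R _).
Proof. by move=> k _ <- x y exy; exact: (ring_mult_comp _ _ (reflexivity _) _ _ exy). Qed.

Ltac combine C :=
  transitivity C;
  [ non_commutative_ring
  | repeat match goal with H : _ == 0 |- _ => progress setoid_rewrite H end;
    non_commutative_ring ].

Lemma three_idempotents_sum4 (P Q S : R) :
  P * P == P -> Q * Q == Q -> S * S == S -> P + Q + S == 4%Z * 1 -> 120%Z * 1 == 0.
Proof.
(* With S = 4 - P - Q, idempotency of S reads PQ + QP = 6P + 6Q - 12; its commutator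
   with P gives 5(PQ - QP) = 0; multiplying by P on the left, resp. by Q on the right,
   gives 20PQ = 30P = 30Q, whence 90P = 120 and, multiplying by P once more, 30P = 0. *)
move=> idP idQ idS sum4.
have eS : S == 4%Z * 1 - P - Q by rewrite -sum4; non_commutative_ring.
rewrite eS in idS.
have zP : P * P - P == 0 by rewrite idP; non_commutative_ring.
have zQ : Q * Q - Q == 0 by rewrite idQ; non_commutative_ring.
have zS : (4%Z * 1 - P - Q) * (4%Z * 1 - P - Q) - (4%Z * 1 - P - Q) == 0.
  by rewrite idS; non_commutative_ring.
clear idP idQ idS eS sum4.
have anticomm : P * Q + Q * P - 6%Z * P - 6%Z * Q + 12%Z * 1 == 0.
  combine ((4%Z * 1 - P - Q) * (4%Z * 1 - P - Q) - (4%Z * 1 - P - Q)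
    - (P * P - P) - (Q * Q - Q)).
have PQ_lin : 10%Z * (P * Q) - 30%Z * P - 30%Z * Q + 60%Z * 1 == 0.
  combine (5%Z * (P * Q + Q * P - 6%Z * P - 6%Z * Q + 12%Z * 1)
    + (P * Q + Q * P - 6%Z * P - 6%Z * Q + 12%Z * 1) * P
    - P * (P * Q + Q * P - 6%Z * P - 6%Z * Q + 12%Z * 1)
    + (P * P - P) * Q - Q * (P * P - P)).
have PQ_P : 20%Z * (P * Q) - 30%Z * P == 0.
  combine (10%Z * ((P * P - P) * Q) - 30%Z * (P * P - P)
    - P * (10%Z * (P * Q) - 30%Z * P - 30%Z * Q + 60%Z * 1)).
have PQ_Q : 20%Z * (P * Q) - 30%Z * Q == 0.
  combine (10%Z * (P * (Q * Q - Q)) - 30%Z * (Q * Q - Q)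
    - (10%Z * (P * Q) - 30%Z * P - 30%Z * Q + 60%Z * 1) * Q).
have P_const : 90%Z * P - 120%Z * 1 == 0.
  combine (2%Z * (20%Z * (P * Q) - 30%Z * Q) - (20%Z * (P * Q) - 30%Z * P)
    - 2%Z * (10%Z * (P * Q) - 30%Z * P - 30%Z * Q + 60%Z * 1)).
have P_tors : 30%Z * P == 0.
  combine (90%Z * (P * P - P) - P * (90%Z * P - 120%Z * 1)).
combine (3%Z * (30%Z * P) - (90%Z * P - 120%Z * 1)).
Qed.

End SetoidRing.
End IdempotentSums.

Section NormalForm.
Variables (n m : nat).
Hypothesis m_gt0 : (0 < m)%N.

Fixpoint reduced (w : seq (letter n)) : bool :=
  if w is x :: w' then
    [&& (0 < x.2 < m)%N, (if w' is y :: _ then y.1 != x.1 else true) & reduced w']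
  else true.

Lemma push_modn (i : 'I_n) k w : push m (i, k %% m) w = push m (i, k) w.
Proof. by rewrite /push /= modn_mod; case: w => [|y w] //=; rewrite modnDml. Qed.

Lemma push_reduced x w : reduced w -> reduced (push m x w).
Proof.
case: x => i k; rewrite /push /=; case: ifP => // k_m.
case: w => [|[j l] w] /=; first by rewrite ltn_pmod // lt0n k_m.
case/and3P => l_m j_w red_w; case: ifP => [/eqP eq_ij|ne_ij].
  case: ifP => [_|kl_m] //=.
  by rewrite ltn_pmod // lt0n kl_m eq_ij j_w red_w.
by rewrite /= ltn_pmod // lt0n k_m /= eq_sym ne_ij l_m j_w red_w.
Qed.

Lemma pushD (i : 'I_n) k l w : reduced w ->
  push m (i, k) (push m (i, l) w) = push m (i, k + l) w.
Proof.
move=> red_w; case l_m: (l %% m == 0)%N.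
  have -> : push m (i, l) w = w by rewrite /push /= l_m.
  by rewrite -(push_modn i (k + l)) -modnDmr (eqP l_m) addn0 push_modn.
case: w red_w => [|[j y] w] /= red_w.
  rewrite /push /= l_m /= eqxx modnDmr.
  case: ifP => k_m; last by case: ifP.
  by rewrite -modnDml (eqP k_m) add0n l_m.
case/and3P: red_w => /andP[y_gt0 y_lt] j_w red_w.
rewrite [push m (i, l) _]/push /= l_m /=.
have [eq_ij|ne_ij] := eqVneq i j; last first.
  rewrite /push /= eqxx modnDmr (negbTE ne_ij).
  by case: ifP => // k_m; rewrite -modnDml (eqP k_m) add0n l_m.
subst j; case: ifP => [/eqP ly_m|ly_m]; rewrite /push /= eqxx.
- case: ifP => k_m.
    by rewrite -modnDml (eqP k_m) add0n l_m -addnA -modnDml (eqP k_m) add0n ly_m.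
  case: ifP => kl_m; last first.
    rewrite -addnA -modnDmr ly_m addn0 k_m.
    by case: w j_w red_w => [|z w] /= j_w _; rewrite // eq_sym (negbTE j_w).
  have k_y : (k %% m = y)%N.
    by rewrite -(modn_small y_lt) -[k]addn0 -ly_m modnDmr addnA -modnDml (eqP kl_m).
  case: w j_w red_w => [|z w] /= j_w _; first by rewrite k_y.
  by rewrite eq_sym (negbTE j_w) k_y.
- rewrite modnDmr addnA; case: ifP => k_m.
    by rewrite -(modnDml k l) (eqP k_m) add0n l_m -addnA -(modnDml k) (eqP k_m) add0n ly_m.
  case kl_m: ((k + l) %% m == 0)%N => //.
  by rewrite -(modnDml (k + l) y) (eqP kl_m) add0n modn_small // eqn0Ngt y_gt0.
Qed.

Lemma foldr_push_reduced r a : reduced r -> reduced (foldr (push m) r a).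
Proof. by move=> red_r; elim: a => //= x a IHa; apply: push_reduced. Qed.

Lemma foldr_push r x a : reduced r ->
  foldr (push m) r (push m x a) = push m x (foldr (push m) r a).
Proof.
move=> red_r; case: x => i k; case k_m: (k %% m == 0)%N.
  have push_id w : push m (i, k) w = w by rewrite /push /= k_m.
  by rewrite !push_id.
case: a => [|[j l] a].
  have -> : push m (i, k) [::] = [:: (i, k %% m)] by rewrite /push /= k_m.
  by rewrite /= push_modn.
have [<-|ne_ij] := eqVneq i j; last first.
  have -> : push m (i, k) ((j, l) :: a) = (i, k %% m) :: (j, l) :: a.
    by rewrite /push /= k_m (negbTE ne_ij).
  by rewrite /= push_modn.
have -> : push m (i, k) ((i, l) :: a) =
    if ((k + l) %% m == 0)%N then a else (i, (k + l) %% m) :: a.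
  by rewrite /push /= k_m eqxx.
rewrite /= pushD ?foldr_push_reduced //.
case: ifP => [kl_m|_] /=; last by rewrite push_modn.
by rewrite -push_modn (eqP kl_m) /push /= mod0n eqxx.
Qed.

Lemma foldr_reduce r t : reduced r -> foldr (push m) r (reduce m t) = foldr (push m) r t.
Proof. by move=> red_r; elim: t => //= x t IHt; rewrite foldr_push // IHt. Qed.

Lemma reduce_catl (t s : seq (letter n)) : reduce m (t ++ s) = reduce m (reduce m t ++ s).
Proof. by rewrite /reduce !foldr_cat foldr_reduce // foldr_push_reduced. Qed.

End NormalForm.

Section Coefficients.
Variables (n m : nat).
Hypothesis m_gt0 : (0 < m)%N.
Local Open Scope ring_scope.
Implicit Types p q r : gelt n.

Definition ceq p q := forall u, coef m p u = coef m q u.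
Definition gneg p : gelt n := [seq (- t.1, t.2) | t <- p].
Definition gscale (c : Cx) p : gelt n := [seq (c * t.1, t.2) | t <- p].

Lemma ceq_trans p q r : ceq p q -> ceq q r -> ceq p r.
Proof. by move=> e1 e2 u; rewrite e1 e2. Qed.

Lemma coefE p u : coef m p u = \sum_(t <- p) (if reduce m t.2 == u then t.1 else 0).
Proof. by rewrite /coef big_mkcond. Qed.

Lemma coef_nil u : coef m ([::] : gelt n) u = 0.
Proof. by rewrite /coef big_nil. Qed.

Lemma coef_cat p q u : coef m (p ++ q) u = coef m p u + coef m q u.
Proof. by rewrite /coef big_cat. Qed.

Lemma coef_flatten (I : Type) (s : seq I) (f : I -> gelt n) u :
  coef m (flatten (map f s)) u = \sum_(i <- s) coef m (f i) u.
Proof.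
elim: s => [|i s IHs] /=; first by rewrite big_nil coef_nil.
by rewrite big_cons coef_cat IHs.
Qed.

Lemma coef_flatten_nseq k p u : coef m (flatten (nseq k p)) u = k%:R * coef m p u.
Proof.
elim: k => [|k IHk] /=; first by rewrite coef_nil mul0r.
by rewrite coef_cat IHk mulrS mulrDl mul1r.
Qed.

Lemma coef_gneg p u : coef m (gneg p) u = - coef m p u.
Proof.
rewrite !coefE big_map -sumrN; apply: eq_bigr => t _ /=.
by case: ifP; rewrite ?oppr0.
Qed.

Lemma coef_gscale c p u : coef m (gscale c p) u = c * coef m p u.
Proof.
rewrite !coefE big_map mulr_sumr; apply: eq_bigr => t _ /=.
by case: ifP; rewrite ?mulr0.
Qed.

Lemma coef_gmul p q u : coef m (gmul p q) u =
  \sum_(t <- p) \sum_(s <- q) (if reduce m (t.2 ++ s.2) == u then t.1 * s.1 else 0).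
Proof. by rewrite coefE /gmul big_allpairs_dep. Qed.

Lemma eq_sum_reduce p q (g : seq (letter n) -> Cx) : ceq p q ->
  \sum_(t <- p) t.1 * g (reduce m t.2) = \sum_(t <- q) t.1 * g (reduce m t.2).
Proof.
move=> e; pose U := undup [seq reduce m t.2 | t <- p ++ q].
have sum_coef r : {subset r <= p ++ q} ->
    \sum_(t <- r) t.1 * g (reduce m t.2) = \sum_(w <- U) coef m r w * g w.
  move=> sub_r; under [RHS]eq_bigr => w _ do rewrite coefE mulr_suml.
  rewrite exchange_big /= big_seq [RHS]big_seq; apply: eq_bigr => t r_t.
  rewrite (bigD1_seq (reduce m t.2)) ?undup_uniq //=; last first.
    by rewrite mem_undup; apply: map_f; apply: sub_r.
  rewrite eqxx big1 ?addr0 // => w; rewrite eq_sym => /negbTE ->.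
  by rewrite mul0r.
rewrite !sum_coef => [|t|t]; last 2 first.
- by rewrite mem_cat => ->; rewrite orbT.
- by rewrite mem_cat => ->.
by apply: eq_bigr => w _; rewrite e.
Qed.

Lemma ceq_gmull r p q : ceq p q -> ceq (gmul r p) (gmul r q).
Proof.
move=> e u; rewrite !coef_gmul; apply: eq_bigr => t _.
pose g w := if foldr (push m) w t.2 == u then t.1 else 0.
have E s : \sum_(x <- s) (if reduce m (t.2 ++ x.2) == u then t.1 * x.1 else 0)
    = \sum_(x <- s) x.1 * g (reduce m x.2).
  apply: eq_bigr => x _; rewrite /g /reduce foldr_cat.
  by case: ifP; rewrite ?mulr0 // mulrC.
by rewrite !E; apply: eq_sum_reduce.
Qed.

Lemma ceq_gmulr r p q : ceq p q -> ceq (gmul p r) (gmul q r).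
Proof.
move=> e u; rewrite !coef_gmul.
pose g w := \sum_(x <- r) (if reduce m (w ++ x.2) == u then x.1 else 0).
have E s : \sum_(t <- s) \sum_(x <- r) (if reduce m (t.2 ++ x.2) == u then t.1 * x.1 else 0)
    = \sum_(t <- s) t.1 * g (reduce m t.2).
  apply: eq_bigr => t _; rewrite /g mulr_sumr; apply: eq_bigr => x _.
  by rewrite (reduce_catl m_gt0); case: ifP; rewrite ?mulr0.
by rewrite !E; apply: eq_sum_reduce.
Qed.

Lemma gmulA p q r : ceq (gmul p (gmul q r)) (gmul (gmul p q) r).
Proof.
move=> u; rewrite !coefE /gmul !big_allpairs_dep.
under eq_bigr => t _ do rewrite big_allpairs_dep.
by apply: eq_bigr => t _; apply: eq_bigr => x _; apply: eq_bigr => y _; rewrite catA mulrA.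
Qed.

Lemma gmulDl p q r : ceq (gmul (p ++ q) r) (gmul p r ++ gmul q r).
Proof. by move=> u; rewrite coef_cat !coef_gmul big_cat. Qed.

Lemma gmulDr p q r : ceq (gmul p (q ++ r)) (gmul p q ++ gmul p r).
Proof.
move=> u; rewrite coef_cat !coef_gmul -big_split /=.
by apply: eq_bigr => t _; rewrite big_cat.
Qed.

Lemma gmulNl p q : ceq (gmul (gneg p) q) (gneg (gmul p q)).
Proof.
move=> u; rewrite coef_gneg !coef_gmul big_map -sumrN; apply: eq_bigr => t _.
by rewrite -sumrN; apply: eq_bigr => s _ /=; case: ifP; rewrite ?oppr0 ?mulNr.
Qed.

Lemma gmulNr p q : ceq (gmul p (gneg q)) (gneg (gmul p q)).
Proof.
move=> u; rewrite coef_gneg !coef_gmul -sumrN; apply: eq_bigr => t _.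
by rewrite big_map -sumrN; apply: eq_bigr => s _ /=; case: ifP; rewrite ?oppr0 ?mulrN.
Qed.

Lemma gmul1l p : ceq (gmul (gone n) p) p.
Proof.
move=> u; rewrite coef_gmul big_seq1 coefE.
by apply: eq_bigr => s _; rewrite mul1r.
Qed.

Lemma gmul1r p : ceq (gmul p (gone n)) p.
Proof.
move=> u; rewrite coef_gmul coefE.
by apply: eq_bigr => t _; rewrite big_seq1 cats0 mulr1.
Qed.

Lemma coef_gmul_flattenl (I : Type) (s : seq I) (f : I -> gelt n) q u :
  coef m (gmul (flatten (map f s)) q) u = \sum_(i <- s) coef m (gmul (f i) q) u.
Proof.
elim: s => [|i s IHs] /=; first by rewrite big_nil coef_gmul big_nil.
by rewrite big_cons gmulDl coef_cat IHs.
Qed.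

Lemma coef_gmul_flattenr (I : Type) (s : seq I) (f : I -> gelt n) p u :
  coef m (gmul p (flatten (map f s))) u = \sum_(i <- s) coef m (gmul p (f i)) u.
Proof.
elim: s => [|i s IHs] /=; first by rewrite big_nil coef_gmul big1 // => t _; rewrite big_nil.
by rewrite big_cons gmulDr coef_cat IHs.
Qed.

End Coefficients.

Section Ideal.
Variables (n m : nat).
Hypothesis m_gt0 : (0 < m)%N.
Variables (eG : rel 'I_n) (eH : rel 'I_m).
Local Open Scope ring_scope.
Implicit Types p q r : gelt n.
Local Notation I := (in_ideal eG eH).
Local Notation ceq := (@ceq n m).

Lemma in_ideal_ceq p q : ceq p q -> I q -> I p.
Proof. by move=> e [l [ok_l e_l]]; exists l; split => // u; rewrite e e_l. Qed.

Lemma in_ideal_nil : I [::].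
Proof. by exists [::]. Qed.

Lemma in_ideal_cat p q : I p -> I q -> I (p ++ q).
Proof.
move=> [l1 [ok1 e1]] [l2 [ok2 e2]]; exists (l1 ++ l2); split; first by rewrite all_cat ok1.
by move=> u; rewrite map_cat flatten_cat !coef_cat e1 e2.
Qed.

Lemma in_ideal_gmull r p : I p -> I (gmul r p).
Proof.
move=> [l [ok_l e_l]]; exists [seq let: (x, s, y) := t in (gmul r x, s, y) | t <- l]; split.
  by move: ok_l; rewrite all_map; apply: sub_all => -[[x s] y].
apply: ceq_trans (ceq_gmull r e_l) _; elim: l {ok_l e_l} => [|[[x s] y] l IHl] /= u.
  by rewrite coef_gmul coef_nil big1 // => t _; rewrite big_nil.
rewrite gmulDr !coef_cat IHl; congr (_ + _).
by rewrite gmulA (ceq_gmulr m_gt0 y (gmulA m r x (igen s))).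
Qed.

Lemma in_ideal_gmulr r p : I p -> I (gmul p r).
Proof.
move=> [l [ok_l e_l]]; exists [seq let: (x, s, y) := t in (x, s, gmul y r) | t <- l]; split.
  by move: ok_l; rewrite all_map; apply: sub_all => -[[x s] y].
apply: ceq_trans (ceq_gmulr m_gt0 r e_l) _; elim: l {ok_l e_l} => [|[[x s] y] l IHl] //= u.
by rewrite gmulDl !coef_cat IHl [in RHS]gmulA.
Qed.

Lemma in_ideal_gscale c p : I p -> I (gscale c p).
Proof.
have -> : gscale c p = gmul [:: (c, [::])] p by rewrite /gmul /= cats0.
exact: in_ideal_gmull.
Qed.

Lemma in_ideal_gneg p : I p -> I (gneg p).
Proof.
move=> Ip; apply: in_ideal_ceq (in_ideal_gscale (-1) Ip) => u.
by rewrite coef_gneg coef_gscale mulN1r.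
Qed.

Lemma in_ideal_flatten (J : eqType) (s : seq J) (f : J -> gelt n) :
  {in s, forall i, I (f i)} -> I (flatten (map f s)).
Proof.
elim: s => [|i s IHs] If /=; first exact: in_ideal_nil.
apply: in_ideal_cat; first by apply: If; rewrite mem_head.
by apply: IHs => j s_j; apply: If; rewrite inE s_j orbT.
Qed.

Lemma in_ideal_gen v w a b : lambda_zero eG eH v w a b ->
  I (gmul (proj_e v a) (proj_e w b)).
Proof.
move=> lz; exists [:: (gone n, (v, w, a, b, false), gone n)]; split; first by rewrite /= lz.
by move=> u /=; rewrite cats0 gmul1r gmul1l.
Qed.

Lemma alg_zero_of_in_ideal1 : I (gone n) -> ~ alg_nonzero eG eH.
Proof. by move=> I1 [p]; apply; apply: in_ideal_ceq (in_ideal_gmull p I1) => u; rewrite gmul1r. Qed.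

End Ideal.

Section QuotientRing.
Variables (n m : nat).
Hypothesis m_gt0 : (0 < m)%N.
Variables (eG : rel 'I_n) (eH : rel 'I_m).
Local Open Scope ring_scope.
Implicit Types p q r : gelt n.
Local Notation I := (in_ideal eG eH).
Local Notation ceq := (@ceq n m).

Definition gsub p q : gelt n := p ++ gneg q.
Definition req p q : Prop := I (gsub p q).

Lemma req_ceq p q : ceq p q -> req p q.
Proof.
move=> e; apply: (in_ideal_ceq (q := [::])) (in_ideal_nil eG eH) => u.
by rewrite coef_cat coef_gneg e subrr coef_nil.
Qed.

Ltac coef_ring := move=> u; rewrite ?(coef_cat, coef_gneg, coef_nil); ring.

Lemma req_sym p q : req p q -> req q p.
Proof. by move=> e; apply: in_ideal_ceq (in_ideal_gneg m_gt0 e); coef_ring. Qed.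

Lemma req_trans p q r : req p q -> req q r -> req p r.
Proof. by move=> e1 e2; apply: in_ideal_ceq (in_ideal_cat e1 e2); coef_ring. Qed.

Lemma req_cat p p' q q' : req p p' -> req q q' -> req (p ++ q) (p' ++ q').
Proof. by move=> e1 e2; apply: in_ideal_ceq (in_ideal_cat e1 e2); coef_ring. Qed.

Lemma req_gneg p p' : req p p' -> req (gneg p) (gneg p').
Proof. by move=> e; apply: in_ideal_ceq (in_ideal_gneg m_gt0 e); coef_ring. Qed.

Lemma req_gsub p p' q q' : req p p' -> req q q' -> req (gsub p q) (gsub p' q').
Proof.
by move=> e1 e2; apply: in_ideal_ceq (in_ideal_cat e1 (in_ideal_gneg m_gt0 e2)); coef_ring.
Qed.

Lemma req_gmul p p' q q' : req p p' -> req q q' -> req (gmul p q) (gmul p' q').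
Proof.
move=> e1 e2; apply: in_ideal_ceq (in_ideal_cat (in_ideal_gmulr m_gt0 q e1) (in_ideal_gmull m_gt0 p' e2)).
move=> u; rewrite !coef_cat coef_gneg gmulDl gmulDr !coef_cat gmulNl gmulNr !coef_gneg; ring.
Qed.

#[local] Instance gring_ops :
  @Ncring.Ring_ops (gelt n) [::] (gone n) cat (@gmul n) gsub (@gneg n) req := {}.

#[local] Instance gring : @Ncring.Ring _ _ _ _ _ _ _ _ gring_ops.
Proof.
constructor.
- by constructor; [move=> p; apply: req_ceq | exact: req_sym | exact: req_trans].
- by move=> p p' e q q' e'; apply: req_cat.
- by move=> p p' e q q' e'; apply: req_gmul.
- by move=> p p' e q q' e'; apply: req_gsub.
- by move=> p p' e; apply: req_gneg.
- by move=> p; apply: req_ceq.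
- by move=> p q; apply: req_ceq; coef_ring.
- by move=> p q r; apply: req_ceq; coef_ring.
- by move=> p; apply: req_ceq; apply: gmul1l.
- by move=> p; apply: req_ceq; apply: gmul1r.
- by move=> p q r; apply: req_ceq; apply: gmulA.
- by move=> p q r; apply: req_ceq; apply: gmulDl.
- by move=> p q r; apply: req_ceq; apply: gmulDr.
- by move=> p q; apply: req_ceq.
- by move=> p; apply: req_ceq; coef_ring.
Qed.

Lemma coef_gen_phiPOS1 (k : BinNums.positive) u :
  coef m (Ncring_initial.gen_phiPOS1 k) u = (BinPos.Pos.to_nat k)%:R * coef m (gone n) u.
Proof.
have coef_twice p : coef m (gmul (gone n ++ gone n) p) u = 2%:R * coef m p u.
  by rewrite gmulDl coef_cat gmul1l mulr2n mulrDl mul1r.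
elim: k => [k IHk|k IHk|] /=;
  cbv [Algebra_syntax.addition Ncring.add_notation Algebra_syntax.multiplication
       Ncring.mul_notation Algebra_syntax.one Ncring.one_notation].
- by rewrite Pnat.Pos2Nat.inj_xI coef_cat coef_twice IHk multE; ring.
- by rewrite Pnat.Pos2Nat.inj_xO coef_twice IHk multE; ring.
- by rewrite mul1r.
Qed.

Lemma req_gen_phiZ (k : nat) :
  req (gmul (Ncring_initial.gen_phiZ (BinInt.Z.of_nat k)) (gone n)) (gscale k%:R (gone n)).
Proof.
apply: req_trans (req_ceq (gmul1r _ _)) _; case: k => [|k].
  by apply: req_ceq => u; rewrite coef_gscale coef_nil mul0r.
apply: req_trans (req_sym (Ncring_initial.same_gen _)) (req_ceq _) => u.
by rewrite coef_gen_phiPOS1 coef_gscale Pnat.SuccNat2Pos.id_succ.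
Qed.

Lemma in_ideal1_of_idempotents (P Q S : gelt n) :
  req (gmul P P) P -> req (gmul Q Q) Q -> req (gmul S S) S ->
  ceq (P ++ Q ++ S) (gscale 4%:R (gone n)) -> I (gone n).
Proof.
move=> idP idQ idS sum4.
rewrite catA in sum4.
have sum4' := req_trans (req_ceq sum4) (req_sym (req_gen_phiZ 4)).
have := req_trans (req_sym (req_gen_phiZ 120))
  (IdempotentSums.three_idempotents_sum4 (Rr := gring) idP idQ idS sum4').
move=> /(in_ideal_gscale m_gt0 120%:R^-1); apply: in_ideal_ceq => u.
rewrite coef_gscale coef_cat coef_gneg coef_nil oppr0 addr0 coef_gscale mulrA.
by rewrite mulVf ?mul1r // pnatr_eq0.
Qed.

End QuotientRing.

Module Omega.
Import Stdlib.Reals.Reals Stdlib.micromega.Lra.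
Local Open Scope ring_scope.

Lemma complexM (a b c d : R) :
  (Complex a b : R[i]) * Complex c d = Complex (a * c - b * d) (a * d + b * c).
Proof. by []. Qed.

Lemma complexJ (a b : R) : (Complex a b : R[i])^* = Complex a (- b).
Proof. by []. Qed.

Lemma omega_expr m k :
  omega m ^+ k = Complex (cos (INR k * (2 * PI / INR m))) (sin (INR k * (2 * PI / INR m))).
Proof.
elim: k => [|k IHk]; first by rewrite expr0 Rmult_0_l cos_0 sin_0.
rewrite exprS IHk S_INR Rmult_plus_distr_r Rmult_1_l Rplus_comm cos_plus sin_plus.
rewrite /omega complexM -!RmultE -RminusE -RplusE.
by congr Complex; rewrite Rplus_comm.
Qed.

Lemma omega_conjM m : (omega m)^* * omega m = 1.
Proof.
rewrite /omega complexJ complexM -!RmultE -RminusE -RplusE -RoppE.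
have := sin2_cos2 (2 * PI / INR m); rewrite /Rsqr => h.
by apply/eqP; rewrite eq_complex /= -R1E -R0E; apply/andP; split; apply/eqP; lra.
Qed.

Lemma omega_primitive (m : nat) : (0 < m)%nat -> m.-primitive_root (omega m).
Proof.
move=> m_gt0; have m_pos : (0 < INR m)%R by apply: lt_0_INR; apply/ltP.
have turn : (INR m * (2 * PI / INR m) = 2 * PI)%R by field; lra.
have step_pos : (0 < 2 * PI / INR m)%R by apply: Rdiv_lt_0_compat => //; have := PI_RGT_0; lra.
apply/andP; split => //; apply/forallP => -[i /= lt_im]; rewrite unity_rootE omega_expr.
case: (eqVneq i.+1 m) => [->|ne_im]; first by rewrite turn cos_2PI sin_2PI !eqxx.
set x := (INR i.+1 * (2 * PI / INR m))%R.
have x_gt0 : (0 < x)%R by apply: Rmult_lt_0_compat => //; apply: lt_0_INR; apply/ltP.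
have x_lt2PI : (x < 2 * PI)%R.
  rewrite -turn; apply: Rmult_lt_compat_r => //; apply: lt_INR; apply/ltP.
  by rewrite ltn_neqAle ne_im.
rewrite eqbF_neg; apply/eqP => -[cos_x sin_x].
have [x0|[xPI|x2PI]] := sin_eq_O_2PI_0 x (Rlt_le _ _ x_gt0) (Rlt_le _ _ x_lt2PI) sin_x; try lra.
by move: cos_x; rewrite xPI cos_PI -R1E; lra.
Qed.
End Omega.

Section UnityRoots.
Local Open Scope ring_scope.

Lemma sum_expr_unity_root (R : idomainType) (m : nat) (z : R) : z ^+ m = 1 ->
  \sum_(k < m) z ^+ k = if z == 1 then m%:R else 0.
Proof.
move=> zm1; have [->|z_neq1] := eqVneq z 1.
  by rewrite (eq_bigr (fun=> 1)) => [|k _]; rewrite ?sumr_const ?card_ord ?expr1n.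
have /esym/eqP := subrX1 z m; rewrite zm1 subrr mulf_eq0 subr_eq0.
by rewrite (negbTE z_neq1) => /eqP.
Qed.

End UnityRoots.

Section Character.
Local Open Scope ring_scope.
Variables (n m : nat).
Hypothesis m_gt0 : (0 < m)%N.
Variable z : 'I_n -> Cx.
Hypothesis z_root : forall v, z v ^+ m = 1.
Hypothesis z_unitary : forall v, (z v)^* * z v = 1.
Implicit Types p q : gelt n.

Definition chi (w : seq (letter n)) : Cx := \prod_(x <- w) z x.1 ^+ x.2.
Definition phi p : Cx := \sum_(t <- p) t.1 * chi t.2.

Lemma z_exprm (v : 'I_n) k : z v ^+ (k %% m) = z v ^+ k.
Proof. exact: expr_mod. Qed.

Lemma chi_cat a b : chi (a ++ b) = chi a * chi b.
Proof. by rewrite /chi big_cat. Qed.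

Lemma chi_push x s : chi (push m x s) = z x.1 ^+ x.2 * chi s.
Proof.
case: x => i k; rewrite /push /=; case: ifP => [/eqP k_m|_].
  by rewrite -z_exprm k_m expr0 mul1r.
case: s => [|[j l] s] /=; first by rewrite /chi big_seq1 big_nil mulr1 z_exprm.
case: eqP => [<-|_]; last by rewrite /chi !big_cons /= z_exprm.
rewrite /chi big_cons /= mulrA -exprD -z_exprm.
by case: ifP => [/eqP->|_]; rewrite ?expr0 ?mul1r // big_cons.
Qed.

Lemma chi_reduce w : chi (reduce m w) = chi w.
Proof. by elim: w => //= x w IHw; rewrite chi_push IHw /chi big_cons. Qed.

Lemma chi_winv w : chi (winv m w) = (chi w)^*.
Proof.
have z_neq0 v : z v != 0.
  by have := oner_neq0 Cx; rewrite -(z_root v) expf_eq0 m_gt0.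
rewrite /winv /chi big_rev big_map rmorph_prod; apply: eq_bigr => -[j k] _ /=.
apply: (mulIf (expf_neq0 k (z_neq0 j))); rewrite rmorphXn -exprMn z_unitary expr1n.
by rewrite -(z_exprm j k) -exprD subnK ?z_root // ltnW // ltn_pmod.
Qed.

Lemma chi_nseq (v : 'I_n) k : chi (nseq k (v, 1%N)) = z v ^+ k.
Proof. by elim: k => [|k IHk]; rewrite /chi ?big_nil // big_cons -/(chi _) IHk exprS. Qed.

Lemma phi_ceq p q : ceq m p q -> phi p = phi q.
Proof.
move=> e; have phiE r : phi r = \sum_(t <- r) t.1 * chi (reduce m t.2).
  by apply: eq_bigr => t _; rewrite chi_reduce.
by rewrite !phiE; apply: eq_sum_reduce.
Qed.

Lemma phi_flatten (I : Type) (s : seq I) (f : I -> gelt n) :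
  phi (flatten (map f s)) = \sum_(i <- s) phi (f i).
Proof.
elim: s => [|i s IHs]; first by rewrite big_nil /phi big_nil.
by rewrite big_cons -IHs /phi big_cat.
Qed.

Lemma phi_gmul p q : phi (gmul p q) = phi p * phi q.
Proof.
rewrite /phi /gmul big_allpairs_dep mulr_suml; apply: eq_bigr => t _.
by rewrite mulr_sumr; apply: eq_bigr => s _ /=; rewrite chi_cat mulrACA.
Qed.

Lemma phi_gstar p : phi (gstar m p) = (phi p)^*.
Proof.
rewrite /phi /gstar big_map rmorph_sum; apply: eq_bigr => t _ /=.
by rewrite chi_winv rmorphM.
Qed.

Lemma phi_gone : phi (gone n) = 1.
Proof. by rewrite /phi big_seq1 /chi big_nil mulr1. Qed.

Lemma phi_proj_e (v : 'I_n) (a : 'I_m) : phi (proj_e v a) = (z v == omega m ^+ a)%:R.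
Proof.
have prim := Omega.omega_primitive m_gt0.
have omega_neq0 : omega m ^+ a != 0.
  by rewrite expf_neq0 //; have := oner_neq0 Cx; rewrite -(prim_expr_order prim) expf_eq0 m_gt0.
pose zeta := (omega m ^+ a)^-1 * z v.
have zeta_root : zeta ^+ m = 1.
  by rewrite exprMn exprVn exprAC (prim_expr_order prim) expr1n invr1 mul1r z_root.
have zeta1 : (zeta == 1) = (z v == omega m ^+ a).
  by rewrite -(inj_eq (mulfI omega_neq0)) mulrA mulfV // mul1r mulr1.
rewrite /phi /proj_e big_map.
have -> : iota 0 m = index_iota 0 m by rewrite /index_iota subn0.
rewrite big_mkord.
under eq_bigr => k _ do rewrite /= chi_nseq exprVn -mulrA -exprMn.
rewrite -mulr_sumr (sum_expr_unity_root zeta_root) zeta1.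
by case: eqP; rewrite ?mulr0 // mulVf // pnatr_eq0 -lt0n.
Qed.

Lemma phi_in_ideal (eG : rel 'I_n) (eH : rel 'I_m) p :
  (forall v w a b, lambda_zero eG eH v w a b -> phi (proj_e v a) * phi (proj_e w b) = 0) ->
  in_ideal eG eH p -> phi p = 0.
Proof.
move=> gen0 [l [ok_l e_l]]; rewrite (phi_ceq e_l) phi_flatten big_seq big1 // => t l_t.
move/allP: ok_l => /(_ t l_t); case: t {l_t} => [[x [[[[v w] a] b] st]] y] /= lz.
by rewrite !phi_gmul; case: st; rewrite /= ?phi_gstar phi_gmul (gen0 _ _ _ _ lz) ?rmorph0 mulr0 mul0r.
Qed.

End Character.

Section GraphHomomorphism.
Local Open Scope ring_scope.

Lemma alg_nonzero_of_hom (n m : nat) (eG : rel 'I_n) (eH : rel 'I_m) (f : 'I_n -> 'I_m) :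
  (0 < m)%N -> (forall v w, eG v w -> eH (f v) (f w)) -> alg_nonzero eG eH.
Proof.
move=> m_gt0 f_hom; have prim := Omega.omega_primitive m_gt0.
pose z v := omega m ^+ f v.
have z_root v : z v ^+ m = 1 by rewrite exprAC (prim_expr_order prim) expr1n.
have z_unitary v : (z v)^* * z v = 1 by rewrite rmorphXn -exprMn Omega.omega_conjM expr1n.
have phi_e v a : phi z (proj_e v a) = (f v == a)%:R.
  by rewrite phi_proj_e // (eq_prim_root_expr prim) !modn_small.
exists (gone n) => I1.
suff : phi z (gone n) = 0 by rewrite phi_gone => /eqP; rewrite oner_eq0.
apply: (phi_in_ideal m_gt0 z_root z_unitary _ I1) => v w a b; rewrite !phi_e.
case/orP => [/andP[/eqP <- a_neq_b] | /andP[eGvw eHab]].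
  by case: eqP => [->|]; rewrite ?mul0r // (negbTE a_neq_b) mulr0.
by case: eqP => [fv_a|]; case: eqP => [fw_b|]; rewrite ?mul0r ?mulr0 //; move: eHab; rewrite -fv_a -fw_b f_hom.
Qed.

End GraphHomomorphism.

Section ColourClasses.
Local Open Scope ring_scope.
Variables (n m : nat).
Hypothesis m_gt0 : (0 < m)%N.

Lemma sum_proj_e (v : 'I_n) : ceq m (flatten [seq proj_e v a | a <- index_enum 'I_m]) (gone n).
Proof.
have prim := Omega.omega_primitive m_gt0.
have geom (k : 'I_m) : \sum_(a < m) ((omega m)^-1 ^+ a) ^+ k = m%:R *+ (k == 0 :> nat).
  under eq_bigr => a _ do rewrite exprAC.
  rewrite sum_expr_unity_root; last by rewrite exprAC exprVn (prim_expr_order prim) invr1 expr1n.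
  rewrite exprVn invr_eq1 -(prim_order_dvd prim).
  by case: k => -[|k] /= lt_km; rewrite ?dvdn0 // gtnNdvd.
move=> u; rewrite coef_flatten coefE big_seq1 /= /proj_e.
have -> : iota 0 m = index_iota 0 m by rewrite /index_iota subn0.
under eq_bigr => a _ do rewrite coefE big_map big_mkord.
under eq_bigr => a _ do under eq_bigr => k _ do rewrite /= -mulrb.
rewrite exchange_big /=.
under eq_bigr => k _ do rewrite sumrMnl -mulr_sumr geom.
rewrite (bigD1 (Ordinal m_gt0)) // big1 => [|k k_neq0]; last first.
  by rewrite -val_eqE /= in k_neq0; rewrite (negbTE k_neq0) mulr0n mulr0 mul0rn.
by rewrite /= addr0 mulr1n mulVf ?pnatr_eq0 -?lt0n // mulrb.
Qed.

Definition colour_class (a : 'I_m) : gelt n := flatten [seq proj_e v a | v <- index_enum 'I_n].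

Lemma coef_sum_colour_classes u :
  coef m (flatten [seq colour_class a | a <- index_enum 'I_m]) u = n%:R * coef m (gone n) u.
Proof.
rewrite coef_flatten; under eq_bigr => a _ do rewrite coef_flatten.
rewrite exchange_big /=; under eq_bigr => v _ do rewrite -coef_flatten (sum_proj_e v u).
by rewrite sumr_const card_ord mulr_natl.
Qed.

Lemma coef_proj_e_split (v : 'I_n) (a : 'I_m) u :
  coef m (proj_e v a) u = \sum_(b : 'I_m) coef m (gmul (proj_e v a) (proj_e v b)) u.
Proof. by rewrite -coef_gmul_flattenr (ceq_gmull _ (sum_proj_e v)) gmul1r. Qed.

(* E_a E_a - E_a = sum_v (sum_(w != v) e_{v,a} e_{w,a} - sum_(b != a) e_{v,a} e_{v,b}),
   a combination of generators. *)
Lemma colour_class_idem a :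
  req (@Kgraph n) (@Kgraph m) (gmul (colour_class a) (colour_class a)) (colour_class a).
Proof.
pose X := flatten [seq
  flatten [seq gmul (proj_e v a) (proj_e w a) | w <- index_enum 'I_n & w != v]
  ++ gneg (flatten [seq gmul (proj_e v a) (proj_e v b) | b <- index_enum 'I_m & b != a])
  | v <- index_enum 'I_n].
apply: (in_ideal_ceq (q := X)).
  move=> u; rewrite coef_cat coef_gneg coef_gmul_flattenl !coef_flatten -sumrB.
  apply: eq_bigr => v _; rewrite coef_gmul_flattenr coef_cat coef_gneg !coef_flatten.
  rewrite !big_filter coef_proj_e_split (bigD1 v) //= (bigD1 a) //=.
  by rewrite opprD addrACA subrr add0r.
apply: in_ideal_flatten => v _; apply: in_ideal_cat.
  apply: in_ideal_flatten => w; rewrite mem_filter => /andP[w_neq_v _].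
  by apply: in_ideal_gen; rewrite /lambda_zero /Kgraph eq_sym w_neq_v eqxx orbT.
apply: in_ideal_gneg => //; apply: in_ideal_flatten => b; rewrite mem_filter => /andP[b_neq_a _].
by apply: in_ideal_gen; rewrite /lambda_zero /Kgraph eqxx eq_sym b_neq_a.
Qed.

End ColourClasses.

Lemma flatten_size3 (T : Type) (s : seq (seq T)) : (size s <= 3)%N ->
  flatten s = nth [::] s 0 ++ nth [::] s 1 ++ nth [::] s 2.
Proof. by case: s => [|x [|y [|z [|? ?]]]] //= _; rewrite ?cats0. Qed.

Section KgraphZero.
Local Open Scope ring_scope.

Lemma Kgraph_alg_zero (n c : nat) : (0 < c < n)%N -> (n <= 4)%N ->
  ~ alg_nonzero (@Kgraph n) (@Kgraph c).
Proof.
case/andP=> c_gt0 c_lt_n n_le4.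
pose s := [seq colour_class n a | a <- index_enum 'I_c] ++ nseq (4 - n) (gone n).
have size_s : (size s <= 3)%N.
  rewrite size_cat size_map size_nseq [index_enum _]unlock -enumT size_enum_ord.
  by rewrite -(leq_add2l n) addnCA subnKC // addn4 addn3 !ltnS.
have idem i : req (@Kgraph n) (@Kgraph c) (gmul (nth [::] s i) (nth [::] s i)) (nth [::] s i).
  have [/(mem_nth [::])|/(nth_default [::]) ->] := ltnP i (size s); last first.
    by apply: req_ceq => u; rewrite coef_gmul big_nil.
  rewrite mem_cat => /orP[/mapP[a _ ->]|/nseqP[-> _]]; first exact: colour_class_idem.
  by apply: req_ceq; apply: gmul1l.
apply: (alg_zero_of_in_ideal1 c_gt0); apply: (in_ideal1_of_idempotents c_gt0 (idem 0%N) (idem 1%N) (idem 2%N)).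
move=> u; rewrite -flatten_size3 // flatten_cat coef_cat coef_sum_colour_classes //.
by rewrite coef_flatten_nseq coef_gscale -mulrDl -natrD subnKC.
Qed.

End KgraphZero.

Theorem mainTheorem4 : forall j : nat, (2 <= j <= 4)%N -> chi_alg_is (@Kgraph j) j.
Proof.
move=> j /andP[j_ge2 j_le4]; have j_gt0 : (0 < j)%N by apply: leq_trans j_ge2.
split=> //; split; first exact: (alg_nonzero_of_hom (f := id)).
by move=> c c_range; apply: Kgraph_alg_zero.
Qed.
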